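(* Let $M=\{D(c_1;r_1),D(c_2;r_2),D(c_3;r_3)\}$ be a 2-disk system whose centers $c_1,c_2,c_3$ lie on a common line, with Vietoris–Rips scale $\nu_M>0$. Then $\mu_M=\nu_M$; equivalently (for pairwise distinct disks) $\rho_M(\nu_M)\ge0$.
   Context: A 2-disk system is a finite collection of closed disks $D(c_i;r_i)\subset\mathbb R^2$ with $r_i>0$. $\nu_M=\max_{i<j}\|c_i-c_j\|/(r_i+r_j)$ (Vietoris–Rips scale) and $\mu_M=\inf\{\lambda\ge0:\bigcap_i D(c_i;\lambda r_i)\ne\emptyset\}$ (Čech scale). Definition of $d_{ij}$ for two intersecting disks $D_i,D_j$ ($i\ne j$): write $c_j-c_i=(a,b)$, $\mathbf n_{ij}=(-b,a)$; if the boundary circles meet, $d_{ij}$ is the unique common boundary point with $\langle d_{ij}-c_i,\mathbf n_{ij}\rangle\ge0$; otherwise, with $\lambda_0=\|c_i-c_j\|/|r_i-r_j|$, $d_{ij}$ is the unique point of $\partial D(c_i;\lambda_0r_i)\cap\partial D(c_j;\lambda_0r_j)$ (equal to $c_i$ if $c_i=c_j$). $d_{ij}(\lambda)$ is this point for the disks rescaled by $\lambda$, and $\rho_M(\lambda)=\max_{i\ne j}\min_{k\notin\{i,j\}}(\lambda r_k-\|d_{ij}(\lambda)-c_k\|)$ for $\lambda\ge\nu_M$. *)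

From Stdlib Require Import Reals.
Open Scope R_scope.

Definition pt := (R * R)%type.

Definition dist2 (p q : pt) : R :=
  sqrt ((fst p - fst q) ^ 2 + (snd p - snd q) ^ 2).

Definition in_disk (c : pt) (r : R) (p : pt) : Prop := dist2 p c <= r.

Definition collinear3 (c1 c2 c3 : pt) : Prop :=
  exists (p d : pt), (fst d <> 0 \/ snd d <> 0) /\
    forall c, (c = c1 \/ c = c2 \/ c = c3) ->
      exists t : R, c = (fst p + t * fst d, snd p + t * snd d).

Definition nu3 (c1 c2 c3 : pt) (r1 r2 r3 : R) : R :=
  Rmax (dist2 c1 c2 / (r1 + r2))
       (Rmax (dist2 c1 c3 / (r1 + r3)) (dist2 c2 c3 / (r2 + r3))).

(* the set whose infimum is the Cech scale mu_M *)
Definition cech_set (c1 c2 c3 : pt) (r1 r2 r3 : R) (l : R) : Prop :=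
  0 <= l /\ exists p : pt,
    in_disk c1 (l * r1) p /\ in_disk c2 (l * r2) p /\ in_disk c3 (l * r3) p.

Definition is_inf (S : R -> Prop) (m : R) : Prop :=
  (forall x, S x -> m <= x) /\ (forall b, (forall x, S x -> b <= x) -> b <= m).

(* The inequality [nu <= mu] holds for any three disks: a common point of the
   disks scaled by [l] is within [l (r_i + r_j)] of each pair of centers.
   Conversely, when the centers lie on a line, the disks scaled by [nu]
   meet that line in three pairwise intersecting intervals, and by Helly's
   theorem on the real line (the largest left endpoint lies in all of them)
   the three scaled disks have a common point. *)

From Stdlib Require Import Reals Rgeom Lra.
Open Scope R_scope.

Lemma dist2_sym p q : dist2 p q = dist2 q p.
Proof. unfold dist2. f_equal. ring. Qed.

Lemma dist2_triangle p q r : dist2 p q <= dist2 p r + dist2 r q.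
Proof.
  assert (Heuc : forall u v, dist2 u v = dist_euc (fst u) (snd u) (fst v) (snd v)).
  { intros u v. unfold dist2, dist_euc. f_equal. unfold Rsqr. ring. }
  rewrite !Heuc. apply triangle.
Qed.

Lemma Rdiv_le_of_le_mul a c l : 0 < c -> a <= l * c -> a / c <= l.
Proof.
  intros Hc H. apply Rmult_le_reg_r with c; [exact Hc|].
  unfold Rdiv. rewrite Rmult_assoc, Rinv_l by lra. lra.
Qed.

Lemma Rle_mul_of_div_le a c l : 0 < c -> a / c <= l -> a <= l * c.
Proof.
  intros Hc H. replace a with (a / c * c) by (field; lra).
  apply Rmult_le_compat_r; lra.
Qed.

Lemma nu3_le_cech_set c1 c2 c3 r1 r2 r3 l :
  0 < r1 -> 0 < r2 -> 0 < r3 ->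
  cech_set c1 c2 c3 r1 r2 r3 l -> nu3 c1 c2 c3 r1 r2 r3 <= l.
Proof.
  intros hr1 hr2 hr3 [_ [p [h1 [h2 h3]]]]. unfold in_disk in *.
  assert (Hpair : forall ci cj ri rj, 0 < ri -> 0 < rj ->
            dist2 p ci <= l * ri -> dist2 p cj <= l * rj ->
            dist2 ci cj / (ri + rj) <= l).
  { intros ci cj ri rj hri hrj hi hj. apply Rdiv_le_of_le_mul; [lra|].
    pose proof (dist2_triangle ci cj p). rewrite (dist2_sym ci p) in *. lra. }
  unfold nu3. repeat apply Rmax_lub; auto.
Qed.

Lemma nu3_pairwise c1 c2 c3 r1 r2 r3 :
  0 < r1 -> 0 < r2 -> 0 < r3 ->
  let nu := nu3 c1 c2 c3 r1 r2 r3 in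
  dist2 c1 c2 <= nu * r1 + nu * r2 /\
  dist2 c1 c3 <= nu * r1 + nu * r3 /\
  dist2 c2 c3 <= nu * r2 + nu * r3.
Proof.
  intros hr1 hr2 hr3 nu. rewrite <- !Rmult_plus_distr_l.
  unfold nu, nu3.
  repeat split; apply Rle_mul_of_div_le; try lra.
  - apply Rmax_l.
  - eapply Rle_trans; [apply Rmax_l | apply Rmax_r].
  - eapply Rle_trans; [apply Rmax_r | apply Rmax_r].
Qed.

Lemma intervals_meet3 x1 x2 x3 a1 a2 a3 :
  0 <= a1 -> 0 <= a2 -> 0 <= a3 ->
  Rabs (x1 - x2) <= a1 + a2 -> Rabs (x1 - x3) <= a1 + a3 ->
  Rabs (x2 - x3) <= a2 + a3 ->
  exists s, Rabs (s - x1) <= a1 /\ Rabs (s - x2) <= a2 /\ Rabs (s - x3) <= a3.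
Proof.
  intros h1 h2 h3 H12 H13 H23.
  exists (Rmax (x1 - a1) (Rmax (x2 - a2) (x3 - a3))).
  unfold Rmax in *. revert H12 H13 H23.
  repeat destruct Rle_dec; unfold Rabs; repeat destruct Rcase_abs; intros; lra.
Qed.

Definition on_line (p e : pt) (x : R) : pt :=
  (fst p + x * fst e, snd p + x * snd e).

Lemma dist2_on_line p e x y :
  fst e ^ 2 + snd e ^ 2 = 1 -> dist2 (on_line p e x) (on_line p e y) = Rabs (x - y).
Proof.
  intros He. unfold dist2, on_line; cbn [fst snd].
  replace ((fst p + x * fst e - (fst p + y * fst e)) ^ 2 +
           (snd p + x * snd e - (snd p + y * snd e)) ^ 2)
    with (Rsqr (x - y) * (fst e ^ 2 + snd e ^ 2)) by (unfold Rsqr; ring).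
  rewrite He, Rmult_1_r. apply sqrt_Rsqr_abs.
Qed.

Lemma collinear3_unit_line c1 c2 c3 :
  collinear3 c1 c2 c3 ->
  exists p e x1 x2 x3, fst e ^ 2 + snd e ^ 2 = 1 /\
    c1 = on_line p e x1 /\ c2 = on_line p e x2 /\ c3 = on_line p e x3.
Proof.
  intros [p [d [hd Hc]]].
  assert (Hd2 : 0 < fst d ^ 2 + snd d ^ 2).
  { pose proof (pow2_ge_0 (fst d)). pose proof (pow2_ge_0 (snd d)).
    destruct hd as [h | h]; pose proof (Rsqr_pos_lt _ h); rewrite Rsqr_pow2 in *; lra. }
  set (N := sqrt (fst d ^ 2 + snd d ^ 2)).
  assert (HN : 0 < N) by (apply sqrt_lt_R0; exact Hd2).
  assert (HN2 : N ^ 2 = fst d ^ 2 + snd d ^ 2) by (apply pow2_sqrt; lra).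
  set (e := (fst d / N, snd d / N)).
  assert (Hrescale : forall c, (c = c1 \/ c = c2 \/ c = c3) -> exists x, c = on_line p e x).
  { intros c hc. destruct (Hc c hc) as [t ->]. exists (t * N).
    unfold on_line, e; cbn [fst snd]. f_equal; field; lra. }
  destruct (Hrescale c1) as [x1 E1]; [auto|].
  destruct (Hrescale c2) as [x2 E2]; [auto|].
  destruct (Hrescale c3) as [x3 E3]; [auto|].
  exists p, e, x1, x2, x3. repeat split; auto.
  unfold e; cbn [fst snd].
  replace ((fst d / N) ^ 2 + (snd d / N) ^ 2) with ((fst d ^ 2 + snd d ^ 2) / N ^ 2)
    by (field; lra).
  rewrite <- HN2. field. lra.
Qed.

Lemma collinear3_disks_meet c1 c2 c3 a1 a2 a3 :
  collinear3 c1 c2 c3 -> 0 <= a1 -> 0 <= a2 -> 0 <= a3 ->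
  dist2 c1 c2 <= a1 + a2 -> dist2 c1 c3 <= a1 + a3 -> dist2 c2 c3 <= a2 + a3 ->
  exists q, in_disk c1 a1 q /\ in_disk c2 a2 q /\ in_disk c3 a3 q.
Proof.
  intros hcol h1 h2 h3 H12 H13 H23.
  destruct (collinear3_unit_line _ _ _ hcol) as [p [e [x1 [x2 [x3 [He [-> [-> ->]]]]]]]].
  rewrite !dist2_on_line in H12, H13, H23 by exact He.
  destruct (intervals_meet3 x1 x2 x3 a1 a2 a3 h1 h2 h3 H12 H13 H23) as [s [s1 [s2 s3]]].
  exists (on_line p e s). unfold in_disk. rewrite !dist2_on_line by exact He. auto.
Qed.

Theorem mainTheorem8 (c1 c2 c3 : pt) (r1 r2 r3 : R)
  (hr1 : 0 < r1) (hr2 : 0 < r2) (hr3 : 0 < r3)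
  (hcol : collinear3 c1 c2 c3)
  (hnu : 0 < nu3 c1 c2 c3 r1 r2 r3) :
  is_inf (cech_set c1 c2 c3 r1 r2 r3) (nu3 c1 c2 c3 r1 r2 r3).
Proof.
  split.
  - intros l Hl. exact (nu3_le_cech_set _ _ _ _ _ _ _ hr1 hr2 hr3 Hl).
  - intros b Hb. apply Hb. split; [lra|].
    destruct (nu3_pairwise c1 c2 c3 r1 r2 r3 hr1 hr2 hr3) as [H12 [H13 H23]].
    apply collinear3_disks_meet; auto; apply Rmult_le_pos; lra.
Qed.
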